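(* Let $m=2^{\ell-1}$ with $\ell>1$ and let $G=SD_{4m}=\langle a,b\mid a^{2m}=b^2=e,\ bab=a^{m-1}\rangle$ be the semidihedral group. Let $S\subseteq G\setminus\{e\}$ with $S=S^{-1}$ be such that $\mathrm{Cay}(G,S)$ is a bipartite distance-regular graph with diameter $3$ (intersection array $\{k,k-1,k-\mu;1,\mu,k\}$), and let $H$ be the part of this bipartite graph containing the identity element. Then $G$ contains an involution outside $H$, so that $G\cong H\rtimes\mathbb{Z}_2$.
   Context: For a finite group $G$ with identity $e$ and a subset $S\subseteq G\setminus\{e\}$ with $S=S^{-1}$, the Cayley graph $\mathrm{Cay}(G,S)$ has vertex set $G$, two vertices $a,b$ being adjacent iff $ab^{-1}\in S$. A connected graph of diameter $d$ is distance-regular with intersection array $\{b_0,\dots,b_{d-1};c_1,\dots,c_d\}$ if for all vertices $x,y$ at distance $i$, the number of neighbours of $x$ at distance $i+1$ (resp. $i-1$) from $y$ is $b_i$ (resp. $c_i$). *)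

From mathcomp Require Import all_boot fingroup morphism automorphism quotient gproduct.
Set Implicit Arguments. Unset Strict Implicit. Unset Printing Implicit Defensive.
Local Open Scope group_scope.

Definition cay_adj (gT : finGroupType) (S : {set gT}) (x y : gT) : bool :=
  x * y^-1 \in S.

Fixpoint ball (T : finType) (e : rel T) (i : nat) (x : T) : {set T} :=
  match i with
  | 0 => [set x]
  | i'.+1 => ball e i' x :|: [set y | [exists z in ball e i' x, e z y]]
  end.

Definition at_dist (T : finType) (e : rel T) (i : nat) (x y : T) : bool :=
  (y \in ball e i x) && ((i == 0) || (y \notin ball e i.-1 x)).

(* Distance-regular graph of diameter d with intersection array
   {b_0,...,b_{d-1}; c_1,...,c_d}, given as bs = [b_0;...;b_{d-1}],
   cs = [c_1;...;c_d]. *)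
Definition distance_regular (T : finType) (e : rel T) (d : nat)
    (bs cs : seq nat) : Prop :=
  [/\ size bs = d /\ size cs = d,
      (forall x y : T, y \in ball e d x),
      (exists x y : T, at_dist e d x y),
      (forall i x y, i < d -> at_dist e i x y ->
          #|[set z | e x z && at_dist e i.+1 z y]| = nth 0 bs i) &
      (forall i x y, 0 < i <= d -> at_dist e i x y ->
          #|[set z | e x z && at_dist e i.-1 z y]| = nth 0 cs i.-1)].

Definition bip_part (T : finType) (e : rel T) (x : T) : {set T} :=
  [set y | [exists i : 'I_#|T|, ~~ odd i && at_dist e i x y]].

From mathcomp Require Import all_boot fingroup morphism automorphism quotient gproduct cyclic zify.
Set Implicit Arguments. Unset Strict Implicit. Unset Printing Implicit Defensive.
Local Open Scope group_scope.

(* 1. Graph theory.  Since b_i + c_i = k for i = 1, 2, 3, no edge joins two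
      vertices equidistant from a third one; hence the parity of the distance
      to 1 flips along every edge, and on a Cayley graph this parity
      [cay_par] is a homomorphism G -> Z/2 whose kernel is the part H of 1.
      Moreover mu < k, because b_2 = k - mu > 0 in diameter 3.
   2. If b is odd, then b is an involution outside H and H ><| <[b]> = G
      ([kernel_sdprod]).
   3. If b is even we reach a contradiction.  The elements of the odd side
      outside <a> square to the central involution c = a^m; pairing common
      neighbours by z |-> z c shows that mu is even, and a parity count of the
      fixed points of a reflection of the common neighbours of w^2 and 1
      shows that c S = S ([cent_inv_shift]).  Then c and 1 have all k
      neighbours in common, i.e. mu = k, contradicting mu < k. *)

Section Balls.
Variables (T : finType) (e : rel T).

Lemma in_ballS i x y :
  (y \in ball e i.+1 x) = (y \in ball e i x) || [exists w in ball e i x, e w y].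
Proof. by rewrite /= in_setU inE. Qed.

Lemma ball_mono i j x : (i <= j)%N -> ball e i x \subset ball e j x.
Proof.
elim: j => [|j IHj]; first by rewrite leqn0 => /eqP->.
rewrite leq_eqVlt => /orP[/eqP->//|/IHj sij].
by apply: subset_trans sij _; apply/subsetP=> y yi; rewrite in_ballS yi.
Qed.

Lemma ball_step i x y z : y \in ball e i x -> e z x -> y \in ball e i.+1 z.
Proof.
elim: i y => [|i IHi] y.
  rewrite inE => /eqP-> ezx; rewrite in_ballS; apply/orP; right.
  by apply/existsP; exists z; rewrite inE eqxx ezx.
rewrite in_ballS => /orP[/IHi yiz ezx| /existsP[w /andP[wi ewy]] ezx].
  by rewrite in_ballS yiz.
by rewrite in_ballS; apply/orP; right; apply/existsP; exists w; rewrite IHi.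
Qed.

Lemma dist_uniq i j x y : at_dist e i x y -> at_dist e j x y -> i = j.
Proof.
have farther i' j' : (i' < j')%N -> y \in ball e i' x ->
    ~~ ((j' == 0) || (y \notin ball e j'.-1 x)).
  move=> lt_ij yi; rewrite negb_or negbK (subsetP (ball_mono x _) _ yi) ?andbT.
    by rewrite -lt0n (leq_ltn_trans _ lt_ij).
  by rewrite -ltnS (ltn_predK lt_ij).
case/andP=> yi ci /andP[yj cj]; case: (ltngtP i j) => // lt.
  by case/negP: (farther _ _ lt yi).
by case/negP: (farther _ _ lt yj).
Qed.

Lemma dist_ex n x y : y \in ball e n x -> exists2 i, (i <= n)%N & at_dist e i x y.
Proof.
elim: n => [|n IHn] yn; first by exists 0 => //; rewrite /at_dist yn.
case: (boolP (y \in ball e n x)) => [/IHn[i le_in di]|yn'].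
  by exists i => //; apply: leqW.
by exists n.+1 => //; rewrite /at_dist yn yn' orbT.
Qed.

Lemma at_dist0 x : at_dist e 0 x x.
Proof. by rewrite /at_dist inE eqxx. Qed.

Hypothesis e_sym : symmetric e.

Lemma ball_sym i x y : (y \in ball e i x) = (x \in ball e i y).
Proof.
suff sub x' y' : y' \in ball e i x' -> x' \in ball e i y' by apply/idP/idP; apply: sub.
elim: i y' => [|i IHi] y'; first by rewrite !inE eq_sym.
rewrite in_ballS => /orP[/IHi xi| /existsP[w /andP[wi ewy]]].
  by rewrite in_ballS xi.
by apply: ball_step (IHi _ wi) _; rewrite e_sym.
Qed.

Lemma at_dist_sym i x y : at_dist e i x y = at_dist e i y x.
Proof. by rewrite /at_dist (ball_sym i x y) (ball_sym i.-1 x y). Qed.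

Hypothesis e_irr : irreflexive e.

Lemma at_dist1 x y : at_dist e 1 x y = e x y.
Proof.
rewrite /at_dist in_ballS !inE /=; case: eqP => [->|_]; first by rewrite e_irr andbF.
rewrite andbT; apply/existsP/idP => [[w /andP[]]|exy]; first by rewrite inE => /eqP->.
by exists x; rewrite inE eqxx.
Qed.

End Balls.

Lemma card_disjointU3_le (T : finType) (A B C D : {set T}) :
  A :&: B = set0 -> A :&: C = set0 -> B :&: C = set0 -> A :|: B :|: C \subset D ->
  (#|A| + #|B| + #|C| <= #|D|)%N.
Proof.
move=> AB AC BC /subset_leq_card.
by rewrite cardsU setIUl AC BC setU0 cards0 subn0 cardsU AB cards0 subn0.
Qed.

Section BipartiteDRG.
Variables (T : finType) (e : rel T) (k mu : nat).
Hypotheses (e_sym : symmetric e) (e_irr : irreflexive e).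
Hypothesis drg : distance_regular e 3 [:: k; k - 1; k - mu] [:: 1%N; mu; k].

Definition nbr_layer x y j : {set T} := [set z | e x z && at_dist e j z y].

Lemma dist_le3 x y : exists2 i, (i <= 3)%N & at_dist e i x y.
Proof. by case: drg => _ connected _ _ _; apply: dist_ex. Qed.

Lemma b_layer i x y : (i < 3)%N -> at_dist e i x y ->
  #|nbr_layer x y i.+1| = nth 0 [:: k; k - 1; k - mu] i.
Proof. by case: drg => _ _ _ bs _; apply: bs. Qed.

Lemma c_layer i x y : (0 < i <= 3)%N -> at_dist e i x y ->
  #|nbr_layer x y i.-1| = nth 0 [:: 1%N; mu; k] i.-1.
Proof. by case: drg => _ _ _ _ cs; apply: cs. Qed.

Lemma degree x : #|[set z | e x z]| = k.
Proof.
have := @b_layer 0 x x erefl (at_dist0 e x); rewrite /= => <-.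
by apply: eq_card => z; rewrite !inE at_dist1 // [e z x]e_sym andbb.
Qed.

Lemma layer_sum x y i : (0 < i)%N ->
  (#|nbr_layer x y i.-1| + #|nbr_layer x y i| + #|nbr_layer x y i.+1| <= k)%N.
Proof.
move=> i_gt0; have disj j j' : j != j' -> nbr_layer x y j :&: nbr_layer x y j' = set0.
  move=> neq_jj'; apply/setP=> z; rewrite !inE; apply/negbTE/negP.
  by case/andP=> /andP[_ dj] /andP[_ dj']; rewrite (dist_uniq dj dj') eqxx in neq_jj'.
rewrite -(degree x); apply: card_disjointU3_le; rewrite ?disj //; try by apply/eqP; lia.
by apply/subsetP=> z; rewrite !inE => /orP[/orP[]|] /andP[->].
Qed.

Lemma no_flat_edge x z y i : e x z -> at_dist e i x y -> at_dist e i z y -> False.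
Proof.
move=> exz dx dz; have [i' le_i3 /(dist_uniq dx) eq_ii'] := dist_le3 x y; subst i'.
case: i dx dz le_i3 => [|i] dx dz le_i3.
  move: dx dz; rewrite /at_dist !inE !andbT => /eqP-> /eqP eq_zy.
  by rewrite eq_zy e_irr in exz.
have layer_i : (0 < #|nbr_layer x y i.+1|)%N by apply/card_gt0P; exists z; rewrite inE exz.
have := layer_sum x y (erefl true : (0 < i.+1)%N); rewrite (c_layer _ dx) /=; last by lia.
case: i dx {dz} le_i3 layer_i => [|[|[|//]]] dx _ layer_i.
- by rewrite (b_layer _ dx) //=; lia.
- by rewrite (b_layer _ dx) //=; lia.
- by rewrite /=; lia.
Qed.

Lemma edge_parity x z y i j :
  e x z -> at_dist e i x y -> at_dist e j z y -> odd j = ~~ odd i.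
Proof.
have close u v i' j' : e u v -> at_dist e i' u y -> at_dist e j' v y -> (j' <= i'.+1)%N.
  move=> euv /andP[yu _] dv; rewrite e_sym in euv.
  by have [j'' le_j'' dv''] := dist_ex (ball_step yu euv); rewrite (dist_uniq dv dv'').
move=> exz dx dz; have le_ji := close _ _ _ _ exz dx dz.
have le_ij := close _ _ _ _ (etrans (e_sym z x) exz) dz dx.
have neq_ij : i != j by apply/eqP => eq_ij; subst j; apply: no_flat_edge exz dx dz.
have : (j == i.+1) || (i == j.+1) by lia.
by case/orP => /eqP->; rewrite /= ?negbK.
Qed.

(* The parity of the distance between x and y (all distances are <= 3). *)
Definition odd_dist x y : bool := [exists i : 'I_4, odd i && at_dist e i x y].

Lemma odd_distE i x y : at_dist e i x y -> odd_dist x y = odd i.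
Proof.
move=> dxy; have [i' le_i'3 /(dist_uniq dxy) eq_ii'] := dist_le3 x y; subst i'.
apply/existsP/idP => [[j /andP[odd_j dj]]|odd_i]; first by rewrite -(dist_uniq dj dxy).
by exists (Ordinal (le_i'3 : (i < 4)%N)); rewrite /= odd_i dxy.
Qed.

Lemma odd_dist_edge x z y : e x z -> odd_dist z y = ~~ odd_dist x y.
Proof.
move=> exz; have [i _ dx] := dist_le3 x y; have [j _ dz] := dist_le3 z y.
by rewrite (odd_distE dx) (odd_distE dz) (edge_parity exz dx dz).
Qed.

Lemma bip_partE y : (3 < #|T|)%N -> bip_part e y = [set x | ~~ odd_dist x y].
Proof.
move=> card_T; apply/setP => x; rewrite !inE.
have [i le_i3 dxy] := dist_le3 x y; rewrite (odd_distE dxy).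
apply/existsP/idP => [[j /andP[even_j]]|even_i].
  by rewrite at_dist_sym // => /(dist_uniq dxy)->.
have lt_iT : (i < #|T|)%N by lia.
by exists (Ordinal lt_iT); rewrite /= even_i at_dist_sym.
Qed.

Lemma common_nbrs x y : at_dist e 2 x y -> #|[set z | e x z && e z y]| = mu.
Proof.
move=> dxy; have := c_layer (erefl true : (0 < 2 <= 3)%N) dxy; rewrite /= => <-.
by apply: eq_card => z; rewrite !inE at_dist1.
Qed.

(* Since the diameter is 3, b_2 = k - mu is positive. *)
Lemma mu_lt_k : (mu < k)%N.
Proof.
have [x [y dxy]] : exists x y, at_dist e 3 x y by case: drg.
have k_gt0 : (0 < k)%N.
  case/andP: dxy; rewrite in_ballS orFb => /orP[-> //|/existsP[w /andP[_ ewy]] _].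
  by rewrite -(degree w); apply/card_gt0P; exists y; rewrite inE.
have : (0 < #|nbr_layer x y 2|)%N by rewrite (c_layer (erefl true : (0 < 3 <= 3)%N) dxy).
case/card_gt0P=> z; rewrite inE => /andP[exz dz].
rewrite -subn_gt0 -[(k - mu)%N]/(nth 0 [:: k; k - 1; k - mu] 2) -(b_layer _ dz) //.
by apply/card_gt0P; exists x; rewrite inE e_sym exz.
Qed.

End BipartiteDRG.

Lemma odd_card_involution (T : finType) (f : T -> T) (A : {set T}) :
  {in A, forall x, f x \in A} -> {in A, involutive f} ->
  odd #|A| = odd #|[set x in A | f x == x]|.
Proof.
elim: {A}_.+1 {-2}A (ltnSn #|A|) => // n IHn A le_An fA ffA.
have [x /andP[xA fx]|fixA] := pickP [pred x in A | f x != x]; last first.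
  suff -> : [set x in A | f x == x] = A by [].
  apply/setP=> x; rewrite inE; case xA: (x \in A) => //=.
  by move: (fixA x); rewrite /= xA => /negbFE.
set B := A :\ x :\ f x.
have fxB : f x \in A :\ x by rewrite !inE fx fA.
have card_A : #|A| = #|B|.+2 by rewrite (cardsD1 x A) xA (cardsD1 (f x) (A :\ x)) fxB.
have sameFix : [set y in A | f y == y] = [set y in B | f y == y].
  apply/setP=> y; rewrite !inE; case: (eqVneq (f y) y) => [fy|]; rewrite ?andbF //.
  case: (eqVneq y (f x)) => [yfx|_].
    by rewrite yfx ffA // in fy; rewrite -fy eqxx in fx.
  by case: (eqVneq y x) => [yx|//]; rewrite -yx fy eqxx in fx.
rewrite card_A /= sameFix -IHn ?negbK //.
  by move: le_An; rewrite card_A ltnS => /ltnW.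
  move=> y; rewrite !inE => /and3P[yfx yx yA]; rewrite fA // andbT.
  apply/andP; split; first by apply: contraNneq yx => /(congr1 f); rewrite !ffA // => ->.
  by apply: contraNneq yfx => <-; rewrite ffA.
by move=> y; rewrite !inE => /and3P[_ _ /ffA].
Qed.

Lemma kernel_sdprod (gT : finGroupType) (p : gT -> bool) (t : gT) :
  {morph p : x y / x * y >-> x (+) y} -> t * t = 1 -> p t ->
  [set x | ~~ p x] ><| <[t]> = [set: gT].
Proof.
move=> pM tt pt; have p1 : p 1 = false by have := pM 1 1; rewrite mulg1; case: (p 1).
have pV x : p x^-1 = p x by have := pM x x^-1; rewrite mulgV p1; case: (p x); case: (p x^-1).
have tX i : t ^+ i = if odd i then t else 1.
  by elim: i => [|i IHi]; rewrite ?expg0 // expgS IHi /=; case: (odd i); rewrite ?tt ?mulg1.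
have kerG : group_set [set x | ~~ p x].
  by apply/group_setP; split=> [|x y]; rewrite !inE ?p1 // pM; case: (p x); case: (p y).
have -> : [set x | ~~ p x] = Group kerG by [].
rewrite sdprodE.
- apply/eqP; rewrite eqEsubset subsetT /=; apply/subsetP=> x _.
  case px: (p x); last by rewrite -[x]mulg1 mem_mulg ?inE ?px.
  by rewrite -(mulgKV t x) mem_mulg ?cycle_id // inE pM pV px pt.
- rewrite cycle_subG; apply/normP/eqP; rewrite eqEcard cardJg leqnn andbT.
  apply/subsetP=> x; rewrite mem_conjg !inE conjgE invgK !pM pV.
  by case: (p x); case: (p t).
apply/eqP; rewrite eqEsubset sub1G andbT; apply/subsetP=> x.
rewrite !inE => /andP[px /cycleP[i xE]]; move: px; rewrite xE tX.
by case: (odd i); rewrite ?pt // group1.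
Qed.

Section CayleyGraph.
Variables (gT : finGroupType) (S : {set gT}).
Hypotheses (S1 : 1 \notin S) (SV : S^-1 = S).

Lemma memSV x : (x^-1 \in S) = (x \in S).
Proof. by rewrite -mem_invg SV. Qed.

Lemma cay_sym : symmetric (cay_adj S).
Proof. by move=> x y; rewrite /cay_adj -memSV invMg invgK. Qed.

Lemma cay_irr : irreflexive (cay_adj S).
Proof. by move=> x; rewrite /cay_adj mulgV (negbTE S1). Qed.

Lemma flip_morph n (f : gT -> bool) :
  (forall x, x \in ball (cay_adj S) n 1) -> f 1 = false ->
  (forall s x, s \in S -> f (s * x) = ~~ f x) ->
  {morph f : x y / x * y >-> x (+) y}.
Proof.
move=> connected f1 fS x y; move: (connected x); clear connected.
elim: n x => [|n IHn] x.
  by rewrite inE => /eqP->; rewrite mul1g f1.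
rewrite in_ballS => /orP[/IHn //|/existsP[w /andP[wn ewx]]].
have sS : x * w^-1 \in S by rewrite -memSV invMg invgK.
rewrite -(mulgKV w x); move: sS; set s := x * w^-1 => sS.
rewrite -mulgA (fS _ (w * y) sS) (fS _ w sS) IHn //.
by case: (f w); case: (f y).
Qed.

Variables (k mu : nat).
Hypothesis drg : distance_regular (cay_adj S) 3 [:: k; k - 1; k - mu] [:: 1%N; mu; k].

Definition cay_par x : bool := odd_dist (cay_adj S) x 1.

Lemma cay_par1 : cay_par 1 = false.
Proof. by rewrite /cay_par (odd_distE drg (at_dist0 (cay_adj S) 1)). Qed.

Lemma cay_parS s : s \in S -> cay_par s.
Proof.
move=> sS; rewrite /cay_par (odd_distE drg (i := 1)) // at_dist1; last exact: cay_irr.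
by rewrite /cay_adj invg1 mulg1.
Qed.

Lemma cay_parM : {morph cay_par : x y / x * y >-> x (+) y}.
Proof.
apply: (flip_morph (n := 3)) cay_par1 _; first by case: drg => _ connected _ _ _.
move=> s x sS; apply: (odd_dist_edge cay_sym cay_irr drg).
by rewrite /cay_adj invMg mulgA mulgV mul1g memSV.
Qed.

Lemma bip_part_cay : (3 < #|gT|)%N -> bip_part (cay_adj S) 1 = [set x | ~~ cay_par x].
Proof. exact: (bip_partE cay_sym drg). Qed.

(* The common neighbours of h and 1 in Cay(G, S). *)
Definition cay_cnbrs h : {set gT} := [set z in S | h * z^-1 \in S].

(* An element of the even side other than 1 is at distance 2 from 1, so it
   shares exactly mu neighbours with 1. *)
Lemma cay_common_nbrs h : h != 1 -> ~~ cay_par h -> #|cay_cnbrs h| = mu.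
Proof.
move=> h1 ph; have [i le_i3 dh] := dist_le3 drg h 1.
have i2 : i = 2.
  move: ph; rewrite /cay_par (odd_distE drg dh).
  case: i le_i3 dh => [|[|[|[|//]]]] // _ /andP[]; rewrite inE => /eqP eq_h1.
  by rewrite eq_h1 eqxx in h1.
rewrite -(common_nbrs cay_irr drg (x := h) (y := 1)) -?i2 //.
by apply: eq_card => z; rewrite !inE /cay_adj invg1 mulg1 andbC.
Qed.

(* A nontrivial involution on the even side forces mu to be even: right
   multiplication by it pairs off the common neighbours of it and 1. *)
Lemma mu_even c : c * c = 1 -> c != 1 -> ~~ cay_par c -> ~~ odd mu.
Proof.
move=> cc c1 pc; have cV : c^-1 = c by apply/eqP; rewrite eq_invg_mul cc.
rewrite -(cay_common_nbrs c1 pc) (@odd_card_involution _ (fun z => z * c)).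
- rewrite (_ : [set _ in _ | _] = set0) ?cards0 //.
  apply/setP=> z; rewrite /cay_cnbrs !inE; apply/negbTE; apply: contra c1 => /andP[_ /eqP zc].
  by rewrite -(mulKg z c) zc mulVg.
- move=> z; rewrite /cay_cnbrs !inE => /andP[zS czS].
  by rewrite invMg cV mulgA cc mul1g memSV zS -memSV invMg cV czS.
by move=> z _; rewrite -mulgA cc mulg1.
Qed.

End CayleyGraph.

Lemma sqrt_invol_inv (gT : finGroupType) (x c : gT) :
  x * x = c -> c * c = 1 -> c * x = x^-1 /\ x * c = x^-1.
Proof.
move=> xx cc; have x4 : x * x * x * x = 1 by rewrite -(mulgA (x * x)) xx.
by split; apply/esym/eqP; rewrite eq_invg_mul -xx !mulgA x4.
Qed.

Section Semidihedral.
Variables (gT : finGroupType) (m : nat) (a b : gT).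
Hypotheses (m_gt0 : (0 < m)%N) (m_even : ~~ odd m).
Hypotheses (gen_ab : <<[set a; b]>> = [set: gT]) (card_G : #|gT| = (4 * m)%N).
Hypotheses (a_2m : a ^+ (2 * m) = 1) (b_2 : b ^+ 2 = 1) (bab : b * a * b = a ^+ m.-1).

Lemma bV : b^-1 = b.
Proof. by apply/eqP; rewrite eq_invg_mul -expg2 b_2. Qed.

Lemma b_norm_a : b \in 'N(<[a]>).
Proof.
apply/normP/eqP; rewrite eqEcard cardJg leqnn andbT -cycleJ cycle_subG.
by rewrite conjgE bV mulgA bab groupX ?cycle_id.
Qed.

Lemma sd_decomp : <[a]> * <[b]> = [set: gT].
Proof.
apply/eqP; rewrite eqEsubset subsetT -norm_joinEr ?cycle_subG ?b_norm_a //= -gen_ab.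
by rewrite gen_subG subUset !sub1set -!cycle_subG joing_subl joing_subr.
Qed.

Lemma b_pow j : b ^+ j = if odd j then b else 1.
Proof.
elim: j => [|j IHj]; rewrite ?expg0 // expgS IHj /=.
by case: (odd j); rewrite ?mulg1 // -expg2 b_2.
Qed.

Lemma outside_a x : x \notin <[a]> -> exists i, x = a ^+ i * b.
Proof.
move=> xa; have : x \in <[a]> * <[b]> by rewrite sd_decomp inE.
case/mulsgP=> u v /cycleP[i ->] /cycleP[j ->] xE; exists i; move: xa.
rewrite xE b_pow; case: (odd j) => //.
by rewrite mulg1 groupX ?cycle_id.
Qed.

Lemma order_a : #[a] = (2 * m)%N.
Proof.
have dvd_a : (#[a] %| 2 * m)%N by rewrite order_dvdn a_2m.
have le_b2 : (#[b] <= 2)%N by apply: dvdn_leq; rewrite ?order_dvdn ?b_2.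
have : (4 * m <= #[a] * 2)%N.
  rewrite -card_G -cardsT -sd_decomp; apply: (@leq_trans (#[a] * #[b])); last first.
    by rewrite leq_mul2l le_b2 orbT.
  by rewrite (mul_cardG <[a]> <[b]>) leq_pmulr.
have : (#[a] <= 2 * m)%N by rewrite dvdn_leq // muln_gt0 m_gt0.
lia.
Qed.

Definition cent_inv : gT := a ^+ m.

Lemma cent_inv_sq : cent_inv * cent_inv = 1.
Proof. by rewrite -expgD addnn -mul2n a_2m. Qed.

Lemma cent_inv_neq1 : cent_inv != 1.
Proof.
apply/eqP => /eqP; rewrite -order_dvdn order_a => /dvdn_leq; lia.
Qed.

Lemma invol_in_a u : u \in <[a]> -> u * u = 1 -> u = 1 \/ u = cent_inv.
Proof.
case/cycleP=> i -> uu; have : (#[a] %| i + i)%N by rewrite order_dvdn expgD uu.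
rewrite order_a addnn -mul2n dvdn_pmul2l // => /dvdnP[q ->].
rewrite mulnC expgM -/cent_inv; elim: q => [|q IHq]; first by left.
by rewrite expgS; case: IHq => ->; rewrite ?mulg1 ?cent_inv_sq; [right|left].
Qed.

Lemma commute_in_a x y : x \in <[a]> -> y \in <[a]> -> commute x y.
Proof. by case/cycleP=> i -> /cycleP[j ->]; apply: commuteX2. Qed.

Section Parity.
Variable p : gT -> bool.
Hypotheses (pM : {morph p : x y / x * y >-> x (+) y}) (p_b : p b = false).

Lemma p_pow x n : p (x ^+ n) = odd n && p x.
Proof.
have p1 : p 1 = false by have := pM 1 1; rewrite mulg1; case: (p 1).
by elim: n => [|n IHn]; rewrite ?expg0 ?p1 // expgS pM IHn /=; case: (p x); case: (odd n).
Qed.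

Lemma p_cent_inv : p cent_inv = false.
Proof. by rewrite p_pow (negbTE m_even). Qed.

Lemma square_outside s : s \notin <[a]> -> p s -> s * s = cent_inv.
Proof.
move=> sa; have [i ->] := outside_a sa; rewrite pM p_b addbF p_pow => /andP[odd_i _].
have conj_ai : b * a ^+ i * b = a ^+ (m.-1 * i).
  by rewrite -{1}bV -mulgA -conjgE conjXg conjgE bV mulgA bab -expgM.
rewrite -mulgA (mulgA b) conj_ai -expgD.
have -> : (i + m.-1 * i = m + 2 * m * i./2)%N.
  have := odd_double_half i; rewrite odd_i -muln2 => i_eq.
  by rewrite -{1 3}i_eq; case: m m_gt0 => //= n _; nia.
by rewrite expgD expgM a_2m expg1n mulg1.
Qed.

End Parity.

Section EvenGenerator.
Variables (S : {set gT}) (k mu : nat).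
Hypotheses (S1 : 1 \notin S) (SV : S^-1 = S).
Hypothesis drg : distance_regular (cay_adj S) 3 [:: k; k - 1; k - mu] [:: 1%N; mu; k].
Hypothesis par_b : cay_par S b = false.

Let parM := cay_parM S1 SV drg.
Let parS := cay_parS S1 drg.

(* For h in <a>, the reflection that pairs off the common neighbours of h
   and 1 (it is an involution of cay_cnbrs S h). *)
Definition reflect_at (h z : gT) : gT := if z \in <[a]> then h * z^-1 else z^-1.

Lemma reflect_atK h : h \in <[a]> -> involutive (reflect_at h).
Proof.
move=> ha z; rewrite /reflect_at; case: (boolP (z \in <[a]>)) => za.
  by rewrite groupM ?groupV // invMg invgK mulgA (commute_in_a ha za) mulgK.
by rewrite groupV (negbTE za) invgK.
Qed.

Lemma reflect_at_nbrs h : h \in <[a]> ->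
  {in cay_cnbrs S h, forall z, reflect_at h z \in cay_cnbrs S h}.
Proof.
move=> ha z; rewrite /cay_cnbrs !inE => /andP[zS hzS]; rewrite /reflect_at.
case: (boolP (z \in <[a]>)) => za.
  by rewrite hzS invMg invgK mulgA (commute_in_a ha za) mulgK.
have hza : h * z^-1 \notin <[a]> by rewrite groupMl ?groupV.
have zz : z * z = cent_inv := square_outside parM par_b za (parS zS).
have [_ hz_c] := sqrt_invol_inv (square_outside parM par_b hza (parS hzS)) cent_inv_sq.
have -> : h * z^-1^-1 = h * z^-1 * cent_inv by rewrite -zz mulgA mulgVK invgK.
by rewrite hz_c !(memSV SV) zS hzS.
Qed.

Lemma reflect_at_fixed w : w \in S -> w \in <[a]> -> cent_inv * w \notin S ->
  [set z in cay_cnbrs S (w * w) | reflect_at (w * w) z == z] = [set w].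
Proof.
move=> wS wa cwS; apply/setP=> z; rewrite /cay_cnbrs !inE.
apply/idP/eqP => [|->]; last by rewrite /reflect_at wa mulgK wS eqxx.
case/andP=> /andP[zS _]; rewrite /reflect_at; case: (boolP (z \in <[a]>)) => za /eqP fz.
  have sq1 : z * w^-1 * (z * w^-1) = 1.
    rewrite -mulgA (mulgA w^-1) -(commute_in_a za (groupVr wa)) !mulgA.
    by rewrite -{1}fz mulgVK mulgK mulgV.
  case: (invol_in_a (groupM za (groupVr wa)) sq1) => /(congr1 (fun u => u * w)); rewrite mulgVK.
    by rewrite mul1g.
  by move=> zE; rewrite -zE zS in cwS.
have zz := square_outside parM par_b za (parS zS).
by move: cent_inv_neq1; rewrite -zz -{1}fz mulVg eqxx.
Qed.

Lemma cent_inv_shift w : w \in S -> cent_inv * w \in S.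
Proof.
move=> wS; have pw := parS wS; case: (boolP (w \in <[a]>)) => wa; last first.
  have [-> _] := sqrt_invol_inv (square_outside parM par_b wa pw) cent_inv_sq.
  by rewrite (memSV SV).
apply: contraT => cwS; have ha : w * w \in <[a]> by rewrite groupM.
have h_even : ~~ cay_par S (w * w) by rewrite parM pw.
have h1 : w * w != 1.
  apply/eqP => /(invol_in_a wa) [w1|wc]; first by move: wS; rewrite w1 (negbTE S1).
  by move: pw; rewrite wc (p_cent_inv parM).
have := odd_card_involution (reflect_at_nbrs ha) (in1W (reflect_atK ha)).
rewrite (cay_common_nbrs S1 drg h1 h_even) (reflect_at_fixed wS wa cwS) cards1.
by move: (mu_even S1 SV drg cent_inv_sq cent_inv_neq1 (negbT (p_cent_inv parM))) => /negbTE->.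
Qed.

(* Then a^m is adjacent to every neighbour of 1, so mu = k, contradicting b_2 > 0. *)
Lemma even_generator_impossible : False.
Proof.
have c_nbrs : cay_cnbrs S cent_inv = S.
  by apply/setP=> z; rewrite inE andb_idr // => zS; rewrite cent_inv_shift ?(memSV SV).
have card_S : #|S| = k.
  rewrite -(degree (cay_sym SV) (cay_irr S1) drg 1); apply: eq_card => z.
  by rewrite !inE /cay_adj mul1g (memSV SV).
have card_S_mu : #|S| = mu.
  by rewrite -{1}c_nbrs (cay_common_nbrs S1 drg cent_inv_neq1) ?(p_cent_inv parM).
by have := mu_lt_k (cay_sym SV) (cay_irr S1) drg; rewrite -card_S_mu card_S ltnn.
Qed.

End EvenGenerator.

End Semidihedral.

Theorem proposition5p5 (gT : finGroupType) (l : nat) (a b : gT)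
  (S : {set gT}) :
  1 < l ->
  let m := (2 ^ l.-1)%N in
  <<[set a; b]>> = [set: gT] ->
  #|gT| = (4 * m)%N ->
  a ^+ (2 * m)%N = 1 -> b ^+ 2 = 1 -> b * a * b = a ^+ m.-1 ->
  1 \notin S -> S^-1 = S ->
  (exists k mu : nat,
     distance_regular (cay_adj S) 3 [:: k; k - 1; k - mu] [:: 1%N; mu; k]) ->
  let H := bip_part (cay_adj S) 1 in
  exists t : gT, [/\ #[t] = 2, t \notin H & H ><| <[t]> = [set: gT]].
Proof.
move=> l_gt1 m gen_ab card_G a_2m b_2 bab S1 SV [k [mu drg]] H.
have m_gt0 : (0 < m)%N by rewrite expn_gt0.
have m_even : ~~ odd m.
  rewrite /m; have [n ->] : exists n, l.-1 = n.+1 by exists l.-2; lia.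
  by rewrite expnS oddM.
have H_eq : H = [set x | ~~ cay_par S x] by rewrite /H (bip_part_cay SV drg) // card_G; lia.
have [par_b|] := boolP (cay_par S b); last first.
  by move/negbTE/(even_generator_impossible m_gt0 m_even gen_ab card_G a_2m b_2 bab S1 SV drg).
exists b; rewrite H_eq inE par_b; split=> //.
  apply/eqP; rewrite eqn_leq dvdn_leq ?order_dvdn ?b_2 //= order_gt1.
  by apply: contraTneq par_b => ->; rewrite (cay_par1 drg).
by apply: kernel_sdprod (cay_parM S1 SV drg) _ par_b; rewrite -expg2.
Qed.
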